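(* Let $F$, $G$, $\Pi$ be as in the context. For every $(\omega,x)\in\Sigma_A\times I$ for which the forward Lyapunov exponent $\chi_+^G(\omega,x)$ with respect to $G$ exists, the forward Lyapunov exponent $\chi_+(\Pi(\omega,x))$ with respect to $F$ exists and $\chi_+^G(\omega,x)=\chi_+(\Pi(\omega,x))$.
   Context: $I=[0,1]$, $R(x)=1-x$. $F(\xi,p)=(\sigma(\xi),f_{\xi_0}(p))$ on $\Sigma_N\times I$, $\Sigma_N=\{1,\ldots,N\}^{\mathbb Z}$, with $f_i$ $C^1$-diffeomorphisms onto their images. $\mathcal I_P$ / $\mathcal I_R$: indices of orientation preserving / reversing $f_i$. $A=(a_{ij})_{i,j=1}^{2N}$ with $a_{ij}=1$ if ($i\in\mathcal I_P$, $j\le N$), or ($i\in\mathcal I_R$, $j>N$), or ($i-N\in\mathcal I_P$, $j>N$), or ($i-N\in\mathcal I_R$, $j\le N$), else $0$; $\Sigma_A$ the $A$-admissible sequences in $\{1,\ldots,2N\}^{\mathbb Z}$ with shift $\sigma_A$; $\pi(\omega)_n=\overline{\omega_n}$ ($\overline i=i$ for $i\le N$, $\overline i=i-N$ otherwise). $G(\omega,x)=(\sigma_A(\omega),g_{\omega_0}(x))$ with $g_i=f_i$, $g_{i+N}=R\circ f_i\circ R$ ($i\in\mathcal I_P$), $g_i=R\circ f_i$, $g_{i+N}=f_i\circ R$ ($i\in\mathcal I_R$). $C=\{\omega\colon\omega_0\le N\}$; $\Pi(\omega,x)=(\pi(\omega),x)$ if $\omega\in C$, $(\pi(\omega),R(x))$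 otherwise. Forward Lyapunov exponents: $\chi_+(\xi,p)=\lim_n\frac1n\log|(f_{\xi_{n-1}}\circ\cdots\circ f_{\xi_0})'(p)|$ and $\chi_+^G(\omega,x)=\lim_n\frac1n\log|(g_{\omega_{n-1}}\circ\cdots\circ g_{\omega_0})'(x)|$, when the limits exist. *)

From Stdlib Require Import Reals ZArith Arith.
From Coquelicot Require Import Coquelicot.
Open Scope R_scope.

Definition inI (x : R) : Prop := 0 <= x <= 1.
Definition Rrefl (x : R) : R := 1 - x.

Definition in_SigmaN (N : nat) (xi : Z -> nat) : Prop :=
  forall n : Z, (1 <= xi n <= N)%nat.

(* Hypotheses on f_i (i = 1..N): C^1 diffeomorphism of I onto its image in I.
   f_i is given as a real function R -> R which is C^1 on R (a C^1 extension
   of the map on I), maps I into I, is injective on I with nonvanishing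
   derivative on I. *)
Definition C1_diffeo_onto_image (h : R -> R) : Prop :=
  (forall x, inI x -> inI (h x)) /\
  (forall x, ex_derive h x) /\
  (forall x, continuous (Derive h) x) /\
  (forall x y, inI x -> inI y -> h x = h y -> x = y) /\
  (forall x, inI x -> Derive h x <> 0).

(* o i = true  means i is in I_P (f_i orientation preserving);
   o i = false means i is in I_R (f_i orientation reversing). *)
Definition orientation_spec (h : R -> R) (b : bool) : Prop :=
  if b then (forall x y, inI x -> inI y -> x < y -> h x < h y)
  else (forall x y, inI x -> inI y -> x < y -> h y < h x).

Definition adm (N : nat) (o : nat -> bool) (i j : nat) : bool :=
  if (i <=? N)%nat then
    (if o i then (j <=? N)%nat else negb (j <=? N)%nat)
  else
    (if o (i - N)%nat then negb (j <=? N)%nat else (j <=? N)%nat).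

Definition in_SigmaA (N : nat) (o : nat -> bool) (w : Z -> nat) : Prop :=
  (forall n : Z, (1 <= w n <= 2 * N)%nat) /\
  (forall n : Z, adm N o (w n) (w (n + 1)%Z) = true).

Definition bar (N : nat) (i : nat) : nat :=
  if (i <=? N)%nat then i else (i - N)%nat.

Definition piA (N : nat) (w : Z -> nat) : Z -> nat := fun n => bar N (w n).

Definition gmap (N : nat) (f : nat -> R -> R) (o : nat -> bool) (j : nat)
  : R -> R :=
  if (j <=? N)%nat then
    (if o j then f j else fun x => Rrefl (f j x))
  else
    (if o (j - N)%nat then fun x => Rrefl (f (j - N)%nat (Rrefl x))
     else fun x => f (j - N)%nat (Rrefl x)).

Definition BigPi (N : nat) (w : Z -> nat) (x : R) : (Z -> nat) * R :=
  if (w 0%Z <=? N)%nat then (piA N w, x) else (piA N w, Rrefl x).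

Fixpoint iter_fib (h : nat -> R -> R) (s : Z -> nat) (n : nat) (p : R) : R :=
  match n with
  | O => p
  | S k => h (s (Z.of_nat k)) (iter_fib h s k p)
  end.

Definition fwd_lyap_is (h : nat -> R -> R) (s : Z -> nat) (p : R) (l : R)
  : Prop :=
  is_lim_seq (fun n => ln (Rabs (Derive (iter_fib h s n) p)) / INR n) l.

(* With e_k := [w_k > N], admissibility of w gives the conjugacy
   g_{w_k} o R^{e_k} = R^{e_{k+1}} o f_{bar w_k} on all of R, hence
   g_{w_{n-1}} o ... o g_{w_0} = R^{e_n} o (f_{bar w_{n-1}} o ... o f_{bar w_0}) o R^{e_0}.
   Since R is an affine isometry, both compositions have derivatives of the same
   absolute value at x and at R^{e_0} x respectively, so the two Lyapunov
   sequences coincide term by term. *)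

From Stdlib Require Import Reals ZArith Arith Lia Lra.
From Coquelicot Require Import Coquelicot.
Open Scope R_scope.

Definition refl_if (b : bool) (y : R) : R := if b then Rrefl y else y.

Lemma Rrefl_involutive (y : R) : Rrefl (Rrefl y) = y.
Proof. unfold Rrefl; ring. Qed.

Lemma refl_if_involutive (b : bool) (y : R) : refl_if b (refl_if b y) = y.
Proof. destruct b; [apply Rrefl_involutive | reflexivity]. Qed.

Lemma is_derive_refl_if (b : bool) (y : R) :
  is_derive (refl_if b) y (if b then -1 else 1).
Proof.
  destruct b; unfold refl_if, Rrefl; auto_derive; auto; ring.
Qed.

Lemma Rabs_Derive_refl_if_conj (h : R -> R) (b b' : bool) (x : R) :
  ex_derive h (refl_if b' x) ->
  Rabs (Derive (fun t => refl_if b (h (refl_if b' t))) x)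
  = Rabs (Derive h (refl_if b' x)).
Proof.
  intros Hh.
  assert (Hd : is_derive (fun t => refl_if b (h (refl_if b' t))) x
                 ((if b' then -1 else 1) * Derive h (refl_if b' x) * (if b then -1 else 1))).
  { apply (is_derive_comp (K := R_AbsRing) (V := R_NormedModule));
      [apply is_derive_refl_if |].
    apply (is_derive_comp (K := R_AbsRing) (V := R_NormedModule));
      [now apply Derive_correct | apply is_derive_refl_if]. }
  apply is_derive_unique in Hd; simpl in Hd; rewrite Hd, !Rabs_mult.
  assert (Hsign : forall c : bool, Rabs (if c then -1 else 1) = 1)
    by (intros []; [rewrite Rabs_left; lra | apply Rabs_R1]).
  rewrite !Hsign; ring.
Qed.

Section Iteration.

Variables (h h' : nat -> R -> R) (s s' : Z -> nat).

Lemma iter_fib_conj (phi : Z -> R -> R) :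
  (forall k y, h (s k) (phi k y) = phi (k + 1)%Z (h' (s' k) y)) ->
  forall n y, iter_fib h s n (phi 0%Z y) = phi (Z.of_nat n) (iter_fib h' s' n y).
Proof.
  intros Hconj n y; induction n as [|n IH]; [reflexivity|].
  simpl iter_fib; rewrite IH, Hconj, Nat2Z.inj_succ; reflexivity.
Qed.

Lemma ex_derive_iter_fib :
  (forall k y, ex_derive (h (s k)) y) -> forall n y, ex_derive (iter_fib h s n) y.
Proof.
  intros Hd n; induction n as [|n IH]; intros y.
  - apply ex_derive_id.
  - apply (ex_derive_comp (h (s (Z.of_nat n))) (iter_fib h s n)); auto.
Qed.

Lemma fwd_lyap_is_Rabs_Derive_ext (p p' l : R) :
  (forall n, Rabs (Derive (iter_fib h s n) p) = Rabs (Derive (iter_fib h' s' n) p')) ->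
  fwd_lyap_is h s p l -> fwd_lyap_is h' s' p' l.
Proof.
  intros Heq; apply is_lim_seq_ext; intros n; now rewrite Heq.
Qed.

End Iteration.

Definition upper_copy (N i : nat) : bool := negb (i <=? N)%nat.

Lemma bar_range (N i : nat) : (1 <= i <= 2 * N)%nat -> (1 <= bar N i <= N)%nat.
Proof.
  unfold bar; destruct (i <=? N)%nat eqn:E;
    [apply Nat.leb_le in E | apply Nat.leb_gt in E]; lia.
Qed.

Lemma gmap_conj (N : nat) (f : nat -> R -> R) (o : nat -> bool) (i j : nat) (y : R) :
  adm N o i j = true ->
  gmap N f o i (refl_if (upper_copy N i) y)
  = refl_if (upper_copy N j) (f (bar N i) y).
Proof.
  unfold adm, gmap, upper_copy, bar, refl_if.
  destruct (i <=? N)%nat, (j <=? N)%nat;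
    [destruct (o i) | destruct (o i) | destruct (o (i - N)%nat) | destruct (o (i - N)%nat)];
    simpl; intros Hadm; try discriminate; try reflexivity.
  all: now rewrite Rrefl_involutive.
Qed.

Lemma BigPi_refl_if (N : nat) (w : Z -> nat) (x : R) :
  BigPi N w x = (piA N w, refl_if (upper_copy N (w 0%Z)) x).
Proof. unfold BigPi, upper_copy; destruct (w 0%Z <=? N)%nat; reflexivity. Qed.

Theorem lemma3p18 (N : nat) (f : nat -> R -> R) (o : nat -> bool)
  (Hf : forall i, (1 <= i <= N)%nat -> C1_diffeo_onto_image (f i))
  (Ho : forall i, (1 <= i <= N)%nat -> orientation_spec (f i) (o i))
  (w : Z -> nat) (x : R) (Hw : in_SigmaA N o w) (Hx : inI x) (l : R) :
  fwd_lyap_is (gmap N f o) w x l ->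
  fwd_lyap_is f (fst (BigPi N w x)) (snd (BigPi N w x)) l.
Proof.
  destruct Hw as [Hrange Hadm].
  set (refl_at := fun k => refl_if (upper_copy N (w k))).
  assert (Hiter : forall n y, iter_fib (gmap N f o) w n (refl_at 0%Z y)
                            = refl_at (Z.of_nat n) (iter_fib f (piA N w) n y)).
  { apply iter_fib_conj; intros k y; apply gmap_conj, Hadm. }
  assert (Hdiff : forall n y, ex_derive (iter_fib f (piA N w) n) y).
  { apply ex_derive_iter_fib; intros k y.
    apply (Hf _ (bar_range N (w k) (Hrange k))). }
  rewrite BigPi_refl_if; simpl.
  apply fwd_lyap_is_Rabs_Derive_ext; intros n.
  rewrite (Derive_ext _ (fun t => refl_at (Z.of_nat n) (iter_fib f (piA N w) n (refl_at 0%Z t))))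
    by (intros t; rewrite <- Hiter; unfold refl_at; now rewrite refl_if_involutive).
  apply Rabs_Derive_refl_if_conj, Hdiff.
Qed.
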